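(* Let $(f_k(t))_{k=0,\ldots,n}$, $t\in[0,1]$, be a constant speed path with speed $v>0$ and coefficients $\boldsymbol\alpha(t)\in\mathcal A$, where $f_k(t)>0$ for all $k\in\{0,\ldots,n\}$ and all $t$, the functions $t\mapsto f_k(t)$ are twice continuously differentiable and the functions $t\mapsto\alpha_k(t)$ are continuously differentiable. Let $t^*\in(0,1)$ and suppose that at $t=t^*$ the following three conditions hold: (1) ($k$-monotonicity) $\alpha_k(t^* )\le\alpha_{k+1}(t^* )$ for all $k=0,\ldots,n-1$; (2) ($t$-monotonicity) $\frac{\partial\alpha_k}{\partial t}(t^* )\ge 0$ for all $k=0,\ldots,n$; (3) (GLC) for all $k=0,\ldots,n-2$, $$\alpha_{k+1}(1-\alpha_{k+1})f_{k+1}^2-\alpha_{k+2}(1-\alpha_k)f_kf_{k+2}\ge 0$$ (all quantities evaluated at $t^*$). Then the entropy $H(t)=-\sum_{k=0}^n f_k(t)\log f_k(t)$ satisfies $H''(t^* )\le 0$.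
   Context: Fix an integer $n\ge1$. For a sequence $(a_k)_{k\in\mathbb Z}$ write $\nabla_1 a_k=a_k-a_{k-1}$. Functions indexed by $k$ are extended by $0$ outside their stated index range. $\mathcal A$ denotes the set of measurable $\boldsymbol\alpha(t)=(\alpha_0(t),\ldots,\alpha_n(t))$, $t\in[0,1]$, with $\alpha_0\equiv0$, $\alpha_n\equiv1$ and $0\le\alpha_k(t)\le1$ for all $k,t$. A family $(f_k(t))_{k=0,\ldots,n}$ of probability mass functions on $\{0,\ldots,n\}$ is a constant speed path with speed $v\in\mathbb R$ and coefficients $\boldsymbol\alpha\in\mathcal A$ if $\frac{\partial f_k}{\partial t}(t)=-v\,\nabla_1 g_k(t)$ for $k=0,\ldots,n$, where $g_k(t)=\alpha_{k+1}(t)f_{k+1}(t)+(1-\alpha_k(t))f_k(t)$ for $k=0,\ldots,n-1$ and $g_k=0$ for $k\notin\{0,\ldots,n-1\}$. *)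

From Stdlib Require Import Reals.
Open Scope R_scope.

Definition in01 (t : R) : Prop := 0 <= t <= 1.
Definition in01o (t : R) : Prop := 0 < t < 1.

Definition alpha_in_A (n : nat) (alpha : nat -> R -> R) : Prop :=
  forall t, in01 t ->
    alpha 0%nat t = 0 /\ alpha n t = 1 /\
    (forall k, (k <= n)%nat -> 0 <= alpha k t <= 1).

Definition is_pmf (n : nat) (f : nat -> R -> R) (t : R) : Prop :=
  (forall k, (k <= n)%nat -> 0 <= f k t) /\ sum_f_R0 (fun k => f k t) n = 1.

Definition gfun (n : nat) (f alpha : nat -> R -> R) (k : nat) (t : R) : R :=
  if Nat.ltb k n then alpha (S k) t * f (S k) t + (1 - alpha k t) * f k t else 0.

Definition nabla_g (n : nat) (f alpha : nat -> R -> R) (k : nat) (t : R) : R :=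
  gfun n f alpha k t - match k with O => 0 | S j => gfun n f alpha j t end.

Definition entropy (n : nat) (f : nat -> R -> R) (t : R) : R :=
  - sum_f_R0 (fun k => f k t * ln (f k t)) n.

(* Write F_k, A_k, B_k for the values of f_k, alpha_k and alpha_k' at time t*,
   and g_k = A_(k+1) F_(k+1) + (1 - A_k) F_k for the flux at t*.  The path equation
   gives f_k' = -v (g_k - g_(k-1)) and, differentiated once more,
   f_k'' = -v (g_k' - g_(k-1)'), where g_k' is explicit in F, A, B and f'.  As
   H'' = - sum_k (f_k'' (ln F_k + 1) + f_k'^2 / F_k), the theorem reduces to the
   nonnegativity of a finite sum built from these sequences.  A summation by parts,
   written as a pointwise identity with a telescoping remainder, turns that sum into
     sum_k ( v B_k F_k (2 ln F_k - ln F_(k-1) - ln F_(k+1)) + v^2 T_k ).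
   The first terms are nonnegative because B_k = 0 unless 0 < A_k < 1 (Fermat's
   rule at an interior extremum of alpha_k), and then GLC with k-monotonicity
   forces F_(k-1) F_(k+1) <= F_k^2.  Each T_k is nonnegative by a three-point
   inequality, obtained from an elementary two-point estimate for the logarithm. *)

From Stdlib Require Import Reals Lra Psatz.
Open Scope R_scope.

Lemma ln_le_sub1 (x : R) : 0 < x -> ln x <= x - 1.
Proof. intros Hx. pose proof (exp_ineq1_le (ln x)) as H. rewrite exp_ln in H; lra. Qed.

Lemma ln_le (x y : R) : 0 < x -> x <= y -> ln x <= ln y.
Proof.
  intros Hx Hxy. destruct (Req_dec x y) as [->|Hne]; [lra|].
  left; apply ln_increasing; lra.
Qed.

(* For x >= 1, ln x <= (x - 1/x) / 2; proved by the mean value theorem, since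
   the difference x^2 - 1 - 2 x ln x has derivative 2 (x - 1 - ln x) >= 0. *)
Lemma ln_le_half_sub_inv (x : R) : 1 <= x -> 2 * x * ln x <= x * x - 1.
Proof.
  intros Hx. destruct (Req_dec x 1) as [->|Hne]; [rewrite ln_1; lra|].
  destruct (MVT_cor2 (fun z => z * z - 1 - 2 * z * ln z)
              (fun z => 2 * (z - 1 - ln z)) 1 x ltac:(lra)) as [c [Hc Hcx]].
  - intros c Hc.
    assert (Hd : derivable_pt_lim (fun z => z * z - 1 - 2 * z * ln z) c
        (1 * c + c * 1 - 0 - ((0 * c + 2 * 1) * ln c + 2 * c * / c))).
    { apply derivable_pt_lim_minus; [apply derivable_pt_lim_minus|].
      - apply (derivable_pt_lim_mult id id); apply derivable_pt_lim_id.
      - apply derivable_pt_lim_const.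
      - apply (derivable_pt_lim_mult (fun z => 2 * z) ln).
        + apply (derivable_pt_lim_mult (fun _ => 2) id);
            [apply derivable_pt_lim_const|apply derivable_pt_lim_id].
        + apply derivable_pt_lim_ln; lra. }
    replace (2 * (c - 1 - ln c)) with (1 * c + c * 1 - 0 - ((0 * c + 2 * 1) * ln c + 2 * c * / c))
      by (field; lra).
    exact Hd.
  - rewrite ln_1 in Hc. pose proof (ln_le_sub1 c ltac:(lra)).
    assert (0 <= 2 * (c - 1 - ln c) * (x - 1)) by (apply Rmult_le_pos; lra). lra.
Qed.

(* Tangent-line bound for ln at a point R0 >= 1, with ln R0 itself estimated by
   the previous lemma. *)
Lemma ln_le_tangent (r R0 : R) : 1 <= R0 -> 0 < r ->
  ln r <= (R0 * R0 - 1) / (2 * R0) + r / R0 - 1.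
Proof.
  intros HR Hr.
  assert (Hq : 0 < r / R0) by (apply Rdiv_lt_0_compat; lra).
  replace r with (R0 * (r / R0)) at 1 by (field; lra).
  rewrite ln_mult by lra.
  pose proof (ln_le_sub1 _ Hq).
  pose proof (ln_le_half_sub_inv R0 HR).
  assert (ln R0 <= (R0 * R0 - 1) / (2 * R0)).
  { apply (Rmult_le_reg_l (2 * R0)); [lra|]. field_simplify; lra. }
  lra.
Qed.

(* After bounding ln r and ln s
   by tangent lines at b/a and (1-a)/(1-b), the defect is a sum of three
   manifestly nonnegative terms. *)
Lemma two_point_ineq (a b r s : R) : 0 < a -> a <= b -> b < 1 ->
  b / a <= r -> (1 - a) / (1 - b) <= s ->
  (1 + (b - a)) * (ln r + ln s) <= (r - 1) + (s - 1).
Proof.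
  intros Ha Hab Hb Hr Hs.
  set (R0 := b / a) in *. set (S0 := (1 - a) / (1 - b)) in *.
  assert (HR1 : 1 <= R0).
  { unfold R0. apply (Rmult_le_reg_l a); [lra|]. field_simplify; lra. }
  assert (HS1 : 1 <= S0).
  { unfold S0. apply (Rmult_le_reg_l (1 - b)); [lra|]. field_simplify; lra. }
  set (U := (R0 * R0 - 1) / (2 * R0) + r / R0 - 1 + ((S0 * S0 - 1) / (2 * S0) + s / S0 - 1)).
  assert (Hln : ln r + ln s <= U).
  { pose proof (ln_le_tangent r R0 HR1 ltac:(lra)).
    pose proof (ln_le_tangent s S0 HS1 ltac:(lra)). unfold U; lra. }
  assert (Defect : (r - 1) + (s - 1) - (1 + (b - a)) * U
     = (r - R0) * ((b - a) * (1 - a) / b) + (s - S0) * (b * (b - a) / (1 - a))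
       + (b - a) * (b - a) * ((1 - a - b) * (1 - a - b)) / (2 * a * b * (1 - a) * (1 - b))).
  { unfold U, R0, S0. field. repeat split; lra. }
  assert (P1 : 0 <= (r - R0) * ((b - a) * (1 - a) / b)).
  { apply Rmult_le_pos; [lra|]. apply Rmult_le_pos; [nra|].
    apply Rlt_le, Rinv_0_lt_compat; lra. }
  assert (P2 : 0 <= (s - S0) * (b * (b - a) / (1 - a))).
  { apply Rmult_le_pos; [lra|]. apply Rmult_le_pos; [nra|].
    apply Rlt_le, Rinv_0_lt_compat; lra. }
  assert (P3 : 0 <= (b - a) * (b - a) * ((1 - a - b) * (1 - a - b))
                    / (2 * a * b * (1 - a) * (1 - b))).
  { apply Rmult_le_pos; [apply Rmult_le_pos; apply Rle_0_sqr|].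
    apply Rlt_le, Rinv_0_lt_compat. repeat apply Rmult_lt_0_compat; lra. }
  assert (0 <= 1 + (b - a)) by lra.
  assert ((1 + (b - a)) * (ln r + ln s) <= (1 + (b - a)) * U)
    by (apply Rmult_le_compat_l; lra).
  lra.
Qed.

Lemma ln_ratio (x y z u : R) : 0 < x -> 0 < y -> 0 < z -> 0 < u ->
  ln (x * y / (z * u)) = ln x + ln y - ln z - ln u.
Proof.
  intros. unfold Rdiv. rewrite ln_mult by (try apply Rinv_0_lt_compat; nra).
  rewrite ln_Rinv by nra. rewrite !ln_mult by nra. ring.
Qed.

(* The substitution w = g0 g1 / F1, r = g1 F1 / (F2 g0), s = g0 F1 / (F0 g1),
   b = a1 F1 / g0, a = a2 F2 / g1 turns it into the two-point inequality; GLC is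
   exactly a <= b.  When a2 = 0 or a0 = 1 one has a = b and ln x <= x - 1 suffices. *)
Lemma three_point_ineq (F0 F1 F2 a0 a1 a2 g0 g1 : R) :
  0 < F0 -> 0 < F1 -> 0 < F2 -> 0 <= a0 -> a0 <= a1 -> a1 <= a2 -> a2 <= 1 ->
  a1 * (1 - a1) * F1 ^ 2 - a2 * (1 - a0) * F0 * F2 >= 0 ->
  g0 = a1 * F1 + (1 - a0) * F0 -> g1 = a2 * F2 + (1 - a1) * F1 ->
  ((1 - a1) * g0 + a1 * g1) * (2 * ln F1 - ln F0 - ln F2)
    <= g1 * (g1 / F2 - g0 / F1) + g0 * (g0 / F0 - g1 / F1).
Proof.
  intros H0 H1 H2 Ha0 H01 H12 Ha2 Hglc Eg0 Eg1.
  assert (Pg0 : 0 < g0) by (destruct (Rle_lt_dec a0 (1/2)); nra).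
  assert (Pg1 : 0 < g1) by (destruct (Rle_lt_dec a1 (1/2)); nra).
  set (w := g0 * g1 / F1). set (r := g1 * F1 / (F2 * g0)).
  set (s := g0 * F1 / (F0 * g1)). set (b := a1 * F1 / g0). set (a := a2 * F2 / g1).
  assert (Pw : 0 < w) by (unfold w; apply Rdiv_lt_0_compat; nra).
  assert (Pr : 0 < r) by (unfold r; apply Rdiv_lt_0_compat; nra).
  assert (Ps : 0 < s) by (unfold s; apply Rdiv_lt_0_compat; nra).
  assert (Elog : 2 * ln F1 - ln F0 - ln F2 = ln r + ln s)
    by (unfold r, s; rewrite !ln_ratio by lra; ring).
  assert (Emean : (1 - a1) * g0 + a1 * g1 = w * (1 + (b - a)))
    by (unfold w, b, a; rewrite Eg0, Eg1; field; split; nra).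
  assert (Erhs : g1 * (g1 / F2 - g0 / F1) + g0 * (g0 / F0 - g1 / F1)
                 = w * ((r - 1) + (s - 1)))
    by (unfold w, r, s; field; repeat split; lra).
  rewrite Elog, Emean, Erhs, Rmult_assoc.
  apply Rmult_le_compat_l; [lra|].
  assert (Hdegenerate : b = a -> (1 + (b - a)) * (ln r + ln s) <= (r - 1) + (s - 1)).
  { intros ->. pose proof (ln_le_sub1 r Pr). pose proof (ln_le_sub1 s Ps). lra. }
  destruct (Req_dec a2 0) as [Z2|Z2].
  { apply Hdegenerate. unfold b, a. rewrite Z2, (Rle_antisym a1 0) by lra. field; lra. }
  destruct (Req_dec a0 1) as [Z0|Z0].
  { apply Hdegenerate. unfold b, a. rewrite Eg0, Eg1, Z0, (Rle_antisym a1 1),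
      (Rle_antisym a2 1) by lra. field; lra. }
  apply two_point_ineq.
  - unfold a; apply Rdiv_lt_0_compat; nra.
  - assert (Eba : b - a = (a1 * (1 - a1) * F1 ^ 2 - a2 * (1 - a0) * F0 * F2) / (g0 * g1))
      by (unfold a, b; rewrite Eg0, Eg1; field; split; lra).
    assert (0 <= (a1 * (1 - a1) * F1 ^ 2 - a2 * (1 - a0) * F0 * F2) / (g0 * g1)).
    { apply Rmult_le_pos; [lra|]. apply Rlt_le, Rinv_0_lt_compat; nra. }
    lra.
  - unfold b. apply (Rmult_lt_reg_l g0); [lra|]. field_simplify; nra.
  - assert (Er : r - b / a = r * ((a2 - a1) / a2))
      by (unfold r, b, a; field; repeat split; lra).
    assert (0 <= r * ((a2 - a1) / a2)).
    { apply Rmult_le_pos; [lra|]. apply Rmult_le_pos; [lra|].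
      apply Rlt_le, Rinv_0_lt_compat; lra. }
    lra.
  - assert (E1 : 1 - a = (1 - a1) * F1 / g1) by (unfold a; rewrite Eg1; field; lra).
    assert (E2 : 1 - b = (1 - a0) * F0 / g0) by (unfold b; rewrite Eg0; field; lra).
    assert (Es : s - (1 - a) / (1 - b) = s * ((a1 - a0) / (1 - a0)))
      by (rewrite E1, E2; unfold s; field; repeat split; lra).
    assert (0 <= s * ((a1 - a0) / (1 - a0))).
    { apply Rmult_le_pos; [lra|]. apply Rmult_le_pos; [lra|].
      apply Rlt_le, Rinv_0_lt_compat; lra. }
    lra.
Qed.

Lemma glc_log_concave (F0 F1 F2 a0 a1 a2 : R) :
  0 < F0 -> 0 < F1 -> 0 < F2 -> 0 <= a0 -> a0 <= a1 -> a1 <= a2 -> 0 < a1 < 1 ->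
  a1 * (1 - a1) * F1 ^ 2 - a2 * (1 - a0) * F0 * F2 >= 0 ->
  0 <= 2 * ln F1 - ln F0 - ln F2.
Proof.
  intros H0 H1 H2 Ha0 H01 H12 Ha1 Hglc.
  assert (Hc : 0 < a1 * (1 - a1)) by nra.
  assert (Hp : 0 < F0 * F2) by nra.
  assert (Hq : F0 * F2 <= F1 * F1).
  { assert (a1 * (1 - a1) * (F0 * F2) <= a2 * (1 - a0) * (F0 * F2))
      by (apply Rmult_le_compat_r; nra).
    apply (Rmult_le_reg_l (a1 * (1 - a1))); nra. }
  pose proof (ln_le _ _ Hp Hq) as HL.
  rewrite !ln_mult in HL by lra. lra.
Qed.

Lemma sum_telescope (a b P : nat -> R) (N : nat) :
  (forall k, (k <= N)%nat -> a k = b k + (P k - P (S k))) ->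
  sum_f_R0 a N = sum_f_R0 b N + (P 0%nat - P (S N)).
Proof.
  induction N as [|N IH]; intros H; simpl.
  - apply H. lia.
  - rewrite IH by (intros; apply H; lia). rewrite (H (S N)) by lia. ring.
Qed.

Lemma sum_nonneg (a : nat -> R) (N : nat) :
  (forall k, (k <= N)%nat -> 0 <= a k) -> 0 <= sum_f_R0 a N.
Proof.
  intros H. rewrite <- (sum_eq_R0 (fun _ => 0) N) by reflexivity.
  apply sum_Rle. exact H.
Qed.

Lemma sq_div_nonneg (x y : R) : 0 < y -> 0 <= x * (x / y).
Proof.
  intros Hy. unfold Rdiv. rewrite <- Rmult_assoc.
  apply Rmult_le_pos; [apply Rle_0_sqr|apply Rlt_le, Rinv_0_lt_compat; exact Hy].
Qed.

Definition prev (h : nat -> R) (k : nat) : R := match k with O => 0 | S j => h j end.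

(* Discrete model of the path at a fixed time: masses F_k, coefficients A_k,
   their time derivatives B_k, and speed v, for k = 0..n. *)
Section SecondVariation.
Variables (n : nat) (F A B : nat -> R) (v : R).

Definition flux (k : nat) : R :=
  if Nat.ltb k n then A (S k) * F (S k) + (1 - A k) * F k else 0.
Definition velocity (k : nat) : R := - v * (flux k - prev flux k).

Definition flux_rate (k : nat) : R :=
  if Nat.ltb k n
  then B (S k) * F (S k) + A (S k) * velocity (S k) + (- B k * F k + (1 - A k) * velocity k)
  else 0.
Definition acceleration (k : nat) : R := - v * (flux_rate k - prev flux_rate k).

Definition log_curvature (k : nat) : R := 2 * ln (F k) - ln (F (pred k)) - ln (F (S k)).
Definition mean_flux (k : nat) : R := (1 - A k) * prev flux k + A k * flux k.
Definition transport (k : nat) : R :=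
  flux k * (flux k / F (S k) - prev flux k / F k)
  + prev flux k * (prev flux k / F (pred k) - flux k / F k)
  - mean_flux k * log_curvature k.

(* Remainder of the summation by parts.  B is cut off beyond n so that the
   remainder vanishes at k = n + 1. *)
Definition B_cut (k : nat) : R := if Nat.leb k n then B k else 0.
Definition remainder (k : nat) : R :=
  v * prev flux_rate k * (ln (F k) + 1) + v * B_cut k * F k * (ln (F (pred k)) - ln (F k))
  - v * v * (mean_flux k * (ln (F (pred k)) - ln (F k))
             + prev flux k * prev flux k / F (pred k) - prev flux k * prev flux k / F k).

Lemma flux_in (k : nat) : (k < n)%nat -> flux k = A (S k) * F (S k) + (1 - A k) * F k.
Proof. intros H. unfold flux. destruct (Nat.ltb_spec k n); [reflexivity|lia]. Qed.
Lemma flux_out (k : nat) : (n <= k)%nat -> flux k = 0.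
Proof. intros H. unfold flux. destruct (Nat.ltb_spec k n); [lia|reflexivity]. Qed.
Lemma flux_rate_in (k : nat) : (k < n)%nat -> flux_rate k =
  B (S k) * F (S k) + A (S k) * velocity (S k) + (- B k * F k + (1 - A k) * velocity k).
Proof. intros H. unfold flux_rate. destruct (Nat.ltb_spec k n); [reflexivity|lia]. Qed.
Lemma flux_rate_out (k : nat) : (n <= k)%nat -> flux_rate k = 0.
Proof. intros H. unfold flux_rate. destruct (Nat.ltb_spec k n); [lia|reflexivity]. Qed.
Lemma B_cut_in (k : nat) : (k <= n)%nat -> B_cut k = B k.
Proof. intros H. unfold B_cut. destruct (Nat.leb_spec k n); [reflexivity|lia]. Qed.
Lemma B_cut_out (k : nat) : (n < k)%nat -> B_cut k = 0.
Proof. intros H. unfold B_cut. destruct (Nat.leb_spec k n); [lia|reflexivity]. Qed.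

Lemma second_variation_pointwise (k : nat) : (k <= n)%nat -> A n = 1 -> B n = 0 ->
  acceleration k * (ln (F k) + 1) + velocity k * (velocity k / F k)
  = (v * B k * F k * log_curvature k + v * v * transport k)
    + (remainder k - remainder (S k)).
Proof.
  intros Hk An Bn.
  unfold acceleration, transport, remainder, log_curvature, mean_flux. cbn [prev pred].
  destruct (Nat.lt_ge_cases k n) as [Hlt|Hge].
  - rewrite flux_rate_in, !B_cut_in by lia. unfold velocity. cbn [prev].
    unfold Rdiv. ring.
  - replace k with n by lia.
    unfold velocity.
    rewrite (flux_rate_out n), (B_cut_out (S n)), (B_cut_in n), (flux_out n),
      (flux_out (S n)), An, Bn by lia.
    unfold Rdiv. ring.
Qed.

Lemma remainder_boundary : remainder 0%nat - remainder (S n) = 0.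
Proof.
  unfold remainder, mean_flux. cbn [prev pred].
  rewrite (flux_rate_out n), (B_cut_out (S n)), (flux_out n), (flux_out (S n)) by lia.
  unfold Rdiv. ring.
Qed.

Hypothesis speed_nonneg : 0 <= v.
Hypothesis mass_pos : forall k, (k <= n)%nat -> 0 < F k.
Hypothesis coef_first : A 0%nat = 0.
Hypothesis coef_last : A n = 1.
Hypothesis coef_range : forall k, (k <= n)%nat -> 0 <= A k <= 1.
Hypothesis coef_mono : forall k, (k < n)%nat -> A k <= A (S k).
Hypothesis rate_nonneg : forall k, (k <= n)%nat -> 0 <= B k.
Hypothesis rate_at_bounds : forall k, (k <= n)%nat -> (A k = 0 \/ A k = 1) -> B k = 0.
Hypothesis glc : forall k, (k + 2 <= n)%nat ->
  A (S k) * (1 - A (S k)) * F (S k) ^ 2 - A (S (S k)) * (1 - A k) * F k * F (S (S k)) >= 0.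

(* n >= 1 is forced by A_0 = 0 and A_n = 1. *)
Lemma n_pos : (1 <= n)%nat.
Proof.
  destruct n as [|m] eqn:En; [|lia].
  exfalso. rewrite coef_last in coef_first. lra.
Qed.

(* Where B_k may be nonzero, 0 < A_k < 1 and GLC gives log-concavity at k. *)
Lemma curvature_term_nonneg (k : nat) : (k <= n)%nat -> 0 <= B k * F k * log_curvature k.
Proof.
  intros Hk.
  destruct (Req_dec (B k) 0) as [Z|Z]; [rewrite Z; lra|].
  assert (HAk : 0 < A k < 1).
  { pose proof (coef_range k Hk).
    split; apply Rnot_le_lt; intro; apply Z, rate_at_bounds; auto; lra. }
  destruct k as [|j]; [rewrite coef_first in HAk; lra|].
  destruct (Nat.eq_dec (S j) n) as [Ejn|Ejn]; [rewrite Ejn, coef_last in HAk; lra|].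
  apply Rmult_le_pos; [apply Rmult_le_pos; [apply rate_nonneg; lia|apply Rlt_le, mass_pos; lia]|].
  apply (glc_log_concave _ _ _ (A j) (A (S j)) (A (S (S j))));
    try (apply mass_pos; lia); try (apply coef_mono; lia); try (apply glc; lia); try lra.
  apply coef_range; lia.
Qed.

(* The transport term is nonnegative: at the two ends it is a single square over
   a mass, and in the interior it is the three-point inequality. *)
Lemma transport_nonneg (k : nat) : (k <= n)%nat -> 0 <= transport k.
Proof.
  intros Hk. pose proof n_pos. unfold transport, mean_flux, log_curvature.
  destruct k as [|j]; cbn [prev pred].
  { rewrite coef_first. pose proof (sq_div_nonneg (flux 0) (F 1%nat) (mass_pos 1 H)).
    unfold Rdiv in *. ring_simplify. lra. }
  destruct (Nat.eq_dec (S j) n) as [Ejn|Ejn].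
  { rewrite Ejn, coef_last, (flux_out n) by lia.
    pose proof (sq_div_nonneg (flux j) (F j) ltac:(apply mass_pos; lia)).
    unfold Rdiv in *. ring_simplify. lra. }
  match goal with |- 0 <= ?X - ?Y => cut (Y <= X); [lra|] end.
  apply (three_point_ineq _ _ _ (A j) (A (S j)) (A (S (S j))));
    try (apply mass_pos; lia); try (apply coef_mono; lia); try (apply flux_in; lia).
  - apply coef_range; lia.
  - apply coef_range; lia.
  - apply glc; lia.
Qed.

Lemma second_variation_nonneg :
  0 <= sum_f_R0 (fun k => acceleration k * (ln (F k) + 1) + velocity k * (velocity k / F k)) n.
Proof.
  rewrite (sum_telescope _ (fun k => v * B k * F k * log_curvature k + v * v * transport k) remainder).
  2:{ intros k Hk. apply second_variation_pointwise; [exact Hk|exact coef_last|].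
      apply rate_at_bounds; [lia|right; exact coef_last]. }
  rewrite remainder_boundary, Rplus_0_r.
  apply sum_nonneg. intros k Hk.
  pose proof (curvature_term_nonneg k Hk). pose proof (transport_nonneg k Hk).
  nra.
Qed.
End SecondVariation.

Lemma derivable_pt_lim_sum (h : nat -> R -> R) (dh : nat -> R) (x : R) (N : nat) :
  (forall k, (k <= N)%nat -> derivable_pt_lim (h k) x (dh k)) ->
  derivable_pt_lim (fun t => sum_f_R0 (fun k => h k t) N) x (sum_f_R0 dh N).
Proof.
  induction N as [|N IH]; intros H; simpl.
  - apply H. lia.
  - apply (derivable_pt_lim_plus (fun t => sum_f_R0 (fun k => h k t) N) (h (S N)));
      [apply IH; intros; apply H; lia|apply H; lia].
Qed.

Lemma derivable_pt_lim_ln_comp (u : R -> R) (x du : R) :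
  derivable_pt_lim u x du -> 0 < u x ->
  derivable_pt_lim (fun t => ln (u t)) x (du / u x).
Proof.
  intros Hu Hpos. unfold Rdiv. rewrite Rmult_comm.
  exact (derivable_pt_lim_comp u ln x du (/ u x) Hu (derivable_pt_lim_ln _ Hpos)).
Qed.

(* (w (ln u + 1))' = w' (ln u + 1) + w u' / u; with w = u this also gives
   (u ln u)' = u' (ln u + 1). *)
Lemma derivable_pt_lim_mul_ln_succ (w u : R -> R) (x dw du : R) :
  derivable_pt_lim w x dw -> derivable_pt_lim u x du -> 0 < u x ->
  derivable_pt_lim (fun t => w t * (ln (u t) + 1)) x (dw * (ln (u x) + 1) + w x * (du / u x)).
Proof.
  intros Hw Hu Hpos.
  replace (du / u x) with (du / u x + 0) by ring.
  apply (derivable_pt_lim_mult w (fun t => ln (u t) + 1)); [exact Hw|].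
  apply (derivable_pt_lim_plus (fun t => ln (u t)) (fun _ => 1));
    [apply derivable_pt_lim_ln_comp; assumption|apply derivable_pt_lim_const].
Qed.

Definition entropy_rate (n : nat) (f df : nat -> R -> R) (t : R) : R :=
  - sum_f_R0 (fun k => df k t * (ln (f k t) + 1)) n.

Lemma entropy_derivative (n : nat) (f df : nat -> R -> R) (t : R) :
  (forall k, (k <= n)%nat -> 0 < f k t) ->
  (forall k, (k <= n)%nat -> derivable_pt_lim (f k) t (df k t)) ->
  derivable_pt_lim (entropy n f) t (entropy_rate n f df t).
Proof.
  intros Hpos Hf. unfold entropy, entropy_rate.
  apply (derivable_pt_lim_opp (fun t => sum_f_R0 (fun k => f k t * ln (f k t)) n)).
  apply (derivable_pt_lim_sum (fun k t => f k t * ln (f k t))). intros k Hk.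
  apply (derivable_pt_lim_ext (fun t => f k t * (ln (f k t) + 1) - f k t)); [intros; ring|].
  replace (df k t * (ln (f k t) + 1))
    with (df k t * (ln (f k t) + 1) + f k t * (df k t / f k t) - df k t)
    by (field; apply Rgt_not_eq, Hpos, Hk).
  apply (derivable_pt_lim_minus (fun t => f k t * (ln (f k t) + 1)) (f k));
    [apply derivable_pt_lim_mul_ln_succ|]; auto.
Qed.

Lemma entropy_rate_derivative (n : nat) (f df d2f : nat -> R -> R) (t : R) :
  (forall k, (k <= n)%nat -> 0 < f k t) ->
  (forall k, (k <= n)%nat -> derivable_pt_lim (f k) t (df k t)) ->
  (forall k, (k <= n)%nat -> derivable_pt_lim (df k) t (d2f k t)) ->
  derivable_pt_lim (entropy_rate n f df) t
    (- sum_f_R0 (fun k => d2f k t * (ln (f k t) + 1) + df k t * (df k t / f k t)) n).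
Proof.
  intros Hpos Hf Hdf. unfold entropy_rate.
  apply (derivable_pt_lim_opp (fun t => sum_f_R0 (fun k => df k t * (ln (f k t) + 1)) n)).
  apply (derivable_pt_lim_sum (fun k t => df k t * (ln (f k t) + 1))). intros k Hk.
  apply derivable_pt_lim_mul_ln_succ; auto.
Qed.

Lemma derivative_zero_at_bound (g : R -> R) (x l : R) :
  0 < x < 1 -> derivable_pt_lim g x l ->
  (forall t, 0 < t < 1 -> 0 <= g t <= 1) -> g x = 0 \/ g x = 1 -> l = 0.
Proof.
  intros Hx Hg Hrange Hbound.
  pose (pr := exist (fun l0 => derivable_pt_lim g x l0) l Hg : derivable_pt g x).
  change l with (derive_pt g x pr).
  destruct Hbound as [Hb|Hb].
  - apply (deriv_minimum g 0 1 x pr); try lra.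
    intros t Ht0 Ht1. rewrite Hb. apply Hrange; lra.
  - apply (deriv_maximum g 0 1 x pr); try lra.
    intros t Ht0 Ht1. rewrite Hb. apply Hrange; lra.
Qed.

Definition at_time (h : nat -> R -> R) (t : R) : nat -> R := fun k => h k t.

Section PathAtTime.
Variables (n : nat) (f alpha df d2f dalpha : nat -> R -> R) (v t : R).
Hypothesis time_interior : 0 < t < 1.
Hypothesis path : forall k s, (k <= n)%nat -> 0 < s < 1 -> df k s = - v * nabla_g n f alpha k s.
Hypothesis f_deriv : forall k, (k <= n)%nat -> derivable_pt_lim (f k) t (df k t).
Hypothesis df_deriv : forall k, (k <= n)%nat -> derivable_pt_lim (df k) t (d2f k t).
Hypothesis alpha_deriv : forall k, (k <= n)%nat -> derivable_pt_lim (alpha k) t (dalpha k t).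

Let F := at_time f t.
Let A := at_time alpha t.
Let B := at_time dalpha t.

Lemma path_velocity (k : nat) : (k <= n)%nat -> df k t = velocity n F A v k.
Proof. intros Hk. rewrite path by auto. destruct k; reflexivity. Qed.

Lemma flux_derivative (j : nat) : (j <= n)%nat ->
  derivable_pt_lim (gfun n f alpha j) t (flux_rate n F A B v j).
Proof.
  intros Hj. unfold gfun, flux_rate. destruct (Nat.ltb_spec j n) as [Hlt|Hge].
  - rewrite <- !path_velocity by lia.
    replace (B (S j) * F (S j) + A (S j) * df (S j) t + (- B j * F j + (1 - A j) * df j t))
      with (dalpha (S j) t * f (S j) t + alpha (S j) t * df (S j) t
            + ((0 - dalpha j t) * f j t + (1 - alpha j t) * df j t)) by (unfold F, A, B, at_time; ring).
    apply derivable_pt_lim_plus.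
    + apply (derivable_pt_lim_mult (alpha (S j)) (f (S j)));
        [apply alpha_deriv|apply f_deriv]; lia.
    + apply (derivable_pt_lim_mult (fun s => 1 - alpha j s) (f j)); [|apply f_deriv; lia].
      apply (derivable_pt_lim_minus (fun _ => 1) (alpha j));
        [apply derivable_pt_lim_const|apply alpha_deriv; lia].
  - apply derivable_pt_lim_const.
Qed.

Lemma path_acceleration (k : nat) : (k <= n)%nat -> d2f k t = acceleration n F A B v k.
Proof.
  intros Hk.
  assert (Hrhs : derivable_pt_lim (fun s => - v * nabla_g n f alpha k s) t (acceleration n F A B v k)).
  { unfold acceleration, nabla_g.
    replace (- v * (flux_rate n F A B v k - prev (flux_rate n F A B v) k))
      with (0 * nabla_g n f alpha k t + - v * (flux_rate n F A B v k - prev (flux_rate n F A B v) k))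
      by ring.
    apply (derivable_pt_lim_mult (fun _ => - v)); [apply derivable_pt_lim_const|].
    apply derivable_pt_lim_minus; [apply flux_derivative; exact Hk|].
    destruct k as [|j]; [apply derivable_pt_lim_const|apply flux_derivative; lia]. }
  apply (uniqueness_limite (df k) t); [apply df_deriv; exact Hk|].
  apply (derivable_pt_lim_locally_ext (fun s => - v * nabla_g n f alpha k s) (df k) t 0 1 _
           time_interior); [|exact Hrhs].
  intros s Hs. symmetry. apply path; auto.
Qed.
End PathAtTime.

Theorem theorem1p2
  (n : nat) (hn : (1 <= n)%nat)
  (f alpha : nat -> R -> R)
  (df d2f dalpha : nat -> R -> R)
  (v : R) (hv : 0 < v)
  (hA : alpha_in_A n alpha)
  (hpmf : forall t, in01 t -> is_pmf n f t)
  (hpos : forall t, in01 t -> forall k, (k <= n)%nat -> 0 < f k t)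
  (hf1 : forall k t, (k <= n)%nat -> in01o t -> derivable_pt_lim (f k) t (df k t))
  (hf2 : forall k t, (k <= n)%nat -> in01o t -> derivable_pt_lim (df k) t (d2f k t))
  (hf2c : forall k t, (k <= n)%nat -> in01o t -> continuity_pt (d2f k) t)
  (ha1 : forall k t, (k <= n)%nat -> in01o t -> derivable_pt_lim (alpha k) t (dalpha k t))
  (ha1c : forall k t, (k <= n)%nat -> in01o t -> continuity_pt (dalpha k) t)
  (hpath : forall k t, (k <= n)%nat -> in01o t -> df k t = - v * nabla_g n f alpha k t)
  (tstar : R) (htstar : in01o tstar)
  (hkmon : forall k, (k < n)%nat -> alpha k tstar <= alpha (S k) tstar)
  (htmon : forall k, (k <= n)%nat -> 0 <= dalpha k tstar)
  (hglc : forall k, (k + 2 <= n)%nat ->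
     alpha (S k) tstar * (1 - alpha (S k) tstar) * (f (S k) tstar) ^ 2
     - alpha (S (S k)) tstar * (1 - alpha k tstar) * f k tstar * f (S (S k)) tstar >= 0) :
  exists dH : R -> R,
    (forall t, in01o t -> derivable_pt_lim (entropy n f) t (dH t)) /\
    exists h2 : R, derivable_pt_lim dH tstar h2 /\ h2 <= 0.
Proof.
  assert (Hclosed : forall t, in01o t -> in01 t) by (unfold in01o, in01; intros; lra).
  destruct (hA tstar (Hclosed _ htstar)) as [A0 [An Arange]].
  exists (entropy_rate n f df). split.
  { intros t Ht. apply entropy_derivative; intros k Hk; [apply hpos|apply hf1]; auto. }
  eexists. split.
  { apply entropy_rate_derivative; intros k Hk; [apply hpos|apply hf1|apply hf2]; auto. }
  (* At t*, f' and f'' are the discrete velocity and acceleration of the path. *)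
  rewrite (sum_eq _ (fun k =>
      acceleration n (at_time f tstar) (at_time alpha tstar) (at_time dalpha tstar) v k
        * (ln (at_time f tstar k) + 1)
      + velocity n (at_time f tstar) (at_time alpha tstar) v k
        * (velocity n (at_time f tstar) (at_time alpha tstar) v k / at_time f tstar k))).
  2:{ intros k Hk.
      rewrite (path_velocity n f alpha df v tstar htstar hpath k Hk),
        (path_acceleration n f alpha df d2f dalpha v tstar htstar hpath) by auto.
      reflexivity. }
  assert (Hrate_bounds : forall k, (k <= n)%nat ->
            alpha k tstar = 0 \/ alpha k tstar = 1 -> dalpha k tstar = 0).
  { intros k Hk. apply (derivative_zero_at_bound (alpha k) tstar); auto.
    intros t Ht. destruct (hA t (Hclosed t Ht)) as [_ [_ Hr]]. auto. }
  pose proof (second_variation_nonneg n (at_time f tstar) (at_time alpha tstar)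
                (at_time dalpha tstar) v ltac:(lra) (hpos tstar (Hclosed _ htstar))
                A0 An Arange hkmon htmon Hrate_bounds hglc).
  lra.
Qed.
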